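(* Let $(\Omega,\mathcal F)$ be a measurable space with $\Sigma\neq\emptyset$, and let $v:\mathcal F\to\mathbb R$ be a non-decreasing continuous set function with $v(\emptyset)=0$. Then $\lim_{n\to\infty}v(A_n)=v(\bigcup_n A_n)$ for every sequence $A_1\subset A_2\subset\cdots$ in $\mathcal F$, and $\lim_{n\to\infty}v(A_n)=v(\bigcap_n A_n)$ for every sequence $A_1\supset A_2\supset\cdots$ in $\mathcal F$.
   Context: $\Sigma$ denotes the set of all classes $\mathcal I\subset\mathcal F$ that are chains (totally ordered by inclusion), contain $\emptyset$ and $\Omega$, and generate $\mathcal F$ as a $\sigma$-algebra. $v$ is non-decreasing if $v(A)\le v(B)$ for $A\subset B$. For $\mathcal I\in\Sigma$ let $\mathcal J$ be the algebra generated by $\mathcal I$, whose elements are the sets $\bigcup_{i=1}^n (C_i\cap D_i^c)$ with $C_1\supset D_1\supset\cdots\supset C_n\supset D_n$ in $\mathcal I$; define $\mu_{v,\mathcal I}$ on $\mathcal J$ by $\mu_{v,\mathcal I}(\bigcup_{i=1}^n (C_i\cap D_i^c))=\sum_{i=1}^n(v(C_i)-v(D_i))$. A non-decreasing $v$ is called continuous if for every $\mathcal I\in\Sigma$ the finitely additive $\mu_{v,\mathcal I}$ is $\sigma$-additive on $\mathcal J$. *)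

From HB Require Import structures.
From mathcomp Require Import all_boot all_order all_algebra.
From mathcomp Require Import all_classical all_reals all_analysis.
Set Implicit Arguments. Unset Strict Implicit. Unset Printing Implicit Defensive.
Import Order.TTheory GRing.Theory Num.Theory.
Import numFieldNormedType.Exports.
Local Open Scope classical_set_scope.
Local Open Scope ring_scope.

Section Defs.
Context {d : measure_display} {T : measurableType d} {R : realType}.

Definition in_Sigma (I : set (set T)) : Prop :=
  [/\ I `<=` measurable,
      (forall A B, I A -> I B -> A `<=` B \/ B `<=` A),
      I set0, I setT &
      <<s I >> = measurable].

(* (n, C, D) is a representation C_0 ⊇ D_0 ⊇ C_1 ⊇ D_1 ⊇ ... ⊇ C_{n-1} ⊇ D_{n-1}
   with all C_i, D_i in I (indices shifted to start at 0). *)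
Definition chain_rep (I : set (set T)) (n : nat) (C D : nat -> set T) : Prop :=
  (forall i, (i < n)%N -> [/\ I (C i), I (D i) & D i `<=` C i]) /\
  (forall i, (i.+1 < n)%N -> C i.+1 `<=` D i).

(* the element \bigcup_i (C_i \ D_i) of the algebra J generated by I *)
Definition rep_set (n : nat) (C D : nat -> set T) : set T :=
  \bigcup_(i in [set i | (i < n)%N]) (C i `&` ~` D i).

(* the value mu_{v,I} of that element *)
Definition rep_val (v : set T -> R) (n : nat) (C D : nat -> set T) : R :=
  \sum_(i < n) (v (C i) - v (D i)).

Definition nondecreasing_sf (v : set T -> R) : Prop :=
  forall A B, measurable A -> measurable B -> A `<=` B -> v A <= v B.

Definition mu_sigma_additive (v : set T -> R) (I : set (set T)) : Prop :=
  forall (nE : nat -> nat) (CE DE : nat -> nat -> set T)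
         (n : nat) (C D : nat -> set T),
    (forall k, chain_rep I (nE k) (CE k) (DE k)) ->
    chain_rep I n C D ->
    trivIset setT (fun k => rep_set (nE k) (CE k) (DE k)) ->
    \bigcup_k rep_set (nE k) (CE k) (DE k) = rep_set n C D ->
    (fun m => \sum_(k < m) rep_val v (nE k) (CE k) (DE k)) @ \oo
      --> rep_val v n C D.

Definition continuous_sf (v : set T -> R) : Prop :=
  nondecreasing_sf v /\
  forall I, in_Sigma I -> mu_sigma_additive v I.

End Defs.

(* Both limits come from the sigma-additivity of mu_{v,J} on a single, well
   chosen chain J in Sigma.  Given some I in Sigma and a nondecreasing sequence
   (A_n), insert a copy of I into each gap of the nested sequence
   set0 <= A_0 <= A_1 <= ... <= \bigcup A <= setT.  The result is again a chain
   containing set0 and setT, it contains every A_n and \bigcup A, and it still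
   generates the sigma-algebra because every B in I is the union of its traces
   on the gaps.  The differences A_{k+1} \ A_k are disjoint elements of the
   algebra with union \bigcup A \ A_0, so sigma-additivity makes
   sum_k (v A_{k+1} - v A_k) converge to v (\bigcup A) - v A_0, which
   telescopes to v A_n --> v (\bigcup A).  Nonincreasing sequences are handled
   by passing to complements, which maps Sigma into itself. *)

From HB Require Import structures.
From mathcomp Require Import all_boot all_order all_algebra.
From mathcomp Require Import all_classical all_reals all_analysis.
Set Implicit Arguments. Unset Strict Implicit. Unset Printing Implicit Defensive.
Import Order.TTheory GRing.Theory Num.Theory.
Import numFieldNormedType.Exports.
Local Open Scope classical_set_scope.
Local Open Scope ring_scope.

Section setD_succ.
Context {T : Type}.
Implicit Types A : (set T)^nat.

Lemma trivIset_setD_succ A : nondecreasing_seq A ->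
  trivIset setT (fun k => A k.+1 `\` A k).
Proof.
by move=> ndA i j _ _ ij; apply: succn_inj; exact: (trivIset_seqD ndA).
Qed.

Lemma bigcup_setD_succ A : nondecreasing_seq A ->
  \bigcup_k (A k.+1 `\` A k) = \bigcup_k A k `\` A 0.
Proof.
move=> ndA; apply/seteqP; split => [x [k _ [Ak1x Akx]]|x [+ A0x]].
  by split; [exists k.+1 | move/(subsetPset _ _ (ndA 0 k (leq0n k)))].
by rewrite -eq_bigcup_seqD => -[[|k] _ //= Dx]; exists k.
Qed.

Lemma setD_succ_setC A k : A k `\` A k.+1 = ~` A k.+1 `\` ~` A k.
Proof. by rewrite !setDE setCK setIC. Qed.

Lemma nondecreasing_seq_setC A :
  nonincreasing_seq A -> nondecreasing_seq (fun n => ~` A n).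
Proof. by move=> niA i j ij; apply/subsetPset/subsetC/subsetPset/niA. Qed.

Lemma bigcup_setD_succ_nonincreasing A : nonincreasing_seq A ->
  \bigcup_k (A k `\` A k.+1) = A 0 `\` \bigcap_k A k.
Proof.
move=> /nondecreasing_seq_setC/bigcup_setD_succ ndCA.
under eq_bigcupr do rewrite setD_succ_setC.
by rewrite ndCA -setC_bigcap !setDE setCK setIC.
Qed.

Lemma trivIset_setD_succ_nonincreasing A : nonincreasing_seq A ->
  trivIset setT (fun k => A k `\` A k.+1).
Proof.
move=> niA; under eq_fun do rewrite setD_succ_setC.
exact/trivIset_setD_succ/nondecreasing_seq_setC.
Qed.
End setD_succ.

Section refine_chain.
Context {d : measure_display} {T : measurableType d}.
Variables (I : set (set T)) (lo hi : nat -> set T).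

Definition refine_chain : set (set T) :=
  [set lo k `|` (B `&` hi k) | k in setT & B in I].

Lemma refine_chain_lo k : I set0 -> refine_chain (lo k).
Proof. by move=> I0; exists k => //; exists set0; rewrite // set0I setU0. Qed.

Hypothesis lo_sub_hi : forall k, lo k `<=` hi k.

Lemma refine_chain_hi k : I setT -> refine_chain (hi k).
Proof.
move=> IT; exists k => //; exists setT; rewrite // setTI.
by apply/setUidPr/lo_sub_hi.
Qed.

Hypothesis gaps_nested :
  forall k m, (k < m)%N -> hi k `<=` lo m \/ hi m `<=` lo k.

Lemma refine_chain_total : (forall A B, I A -> I B -> A `<=` B \/ B `<=` A) ->
  forall X Y, refine_chain X -> refine_chain Y -> X `<=` Y \/ Y `<=` X.
Proof.
move=> Itotal _ _ [k _ [B IB <-]] [m _ [B' IB' <-]].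
have gap_le n p C C' : hi n `<=` lo p ->
    lo n `|` (C `&` hi n) `<=` lo p `|` (C' `&` hi p).
  move=> np x xn; left; apply: np.
  by case: xn => [/lo_sub_hi|[]].
have [km|mk|<-] := ltngtP k m.
- by case: (gaps_nested km) => ?; [left|right]; apply: gap_le.
- by case: (gaps_nested mk) => ?; [right|left]; apply: gap_le.
- by case: (Itotal _ _ IB IB') => BB'; [left|right]; apply: setUS; apply: setSI.
Qed.

Hypothesis gaps_cover : forall x, exists k, hi k x /\ ~ lo k x.

Lemma refine_chain_generates :
  I `<=` measurable -> I set0 -> <<s I >> = measurable ->
  (forall k, measurable (lo k)) -> (forall k, measurable (hi k)) ->
  <<s refine_chain >> = measurable.
Proof.
move=> Imeas I0 Igen mlo mhi.
apply/seteqP; split.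
  apply: smallest_sub; first exact: sigma_algebra_measurable.
  move=> _ [k _ [B IB <-]].
  by apply: measurableU => //; apply: measurableI => //; exact: Imeas.
rewrite -Igen; apply: smallest_sub; first exact: smallest_sigma_algebra.
move=> B IB.
have -> : B = \bigcup_k ((lo k `|` (B `&` hi k)) `\` lo k).
  apply/seteqP; split => [x Bx|x [k _ [[//|[]]]]]//.
  by have [k [hk lk]] := gaps_cover x; exists k => //; split => //; right.
apply: (@bigcupT_measurable _ (g_sigma_algebraType refine_chain)) => k.
apply: (@measurableD _ (g_sigma_algebraType refine_chain));
  apply: sub_sigma_algebra; last exact: refine_chain_lo.
by exists k => //; exists B.
Qed.

Lemma in_Sigma_refine_chain k0 k1 : in_Sigma I ->
  (forall k, measurable (lo k)) -> (forall k, measurable (hi k)) ->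
  lo k0 = set0 -> hi k1 = setT -> in_Sigma refine_chain.
Proof.
move=> [Imeas Itotal I0 IT Igen] mlo mhi lo0 hi1.
have gen : <<s refine_chain >> = measurable by exact: refine_chain_generates.
split.
- by rewrite -gen; exact: sub_sigma_algebra.
- exact: refine_chain_total.
- by rewrite -lo0; exact: refine_chain_lo.
- by rewrite -hi1; exact: refine_chain_hi.
- exact: gen.
Qed.

End refine_chain.

Section monotone_sequences.
Context {d : measure_display} {T : measurableType d}.
Implicit Types (I : set (set T)) (A : (set T)^nat).

Lemma in_Sigma_setC I : in_Sigma I -> in_Sigma (setC @` I).
Proof.
move=> [Imeas Itotal I0 IT Igen]; split.
- by move=> _ [B IB <-]; apply: measurableC; exact: Imeas.
- move=> _ _ [B IB <-] [B' IB' <-].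
  by case: (Itotal _ _ IB IB') => ?; [right|left]; exact: subsetC.
- by exists setT; rewrite // setCT.
- by exists set0; rewrite // setC0.
- apply/seteqP; split.
    apply: smallest_sub; first exact: sigma_algebra_measurable.
    by move=> _ [B IB <-]; apply: measurableC; exact: Imeas.
  rewrite -Igen; apply: smallest_sub; first exact: smallest_sigma_algebra.
  move=> B IB; rewrite -[B]setCK.
  apply: (@measurableC _ (g_sigma_algebraType (setC @` I))).
  by apply: sub_sigma_algebra; exists B.
Qed.

Lemma exists_Sigma_chain_nondecreasing I A : in_Sigma I ->
  (forall n, measurable (A n)) -> nondecreasing_seq A ->
  exists2 J, in_Sigma J & (forall n, J (A n)) /\ J (\bigcup_n A n).
Proof.
move=> SI mA ndA; have [_ _ I0 _ _] := SI.
pose lo k := match k with 0 => \bigcup_n A n | 1 => set0 | j.+2 => A j end.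
pose hi k := match k with 0 => setT | 1 => A 0 | j.+2 => A j.+1 end.
have lo_sub_hi k : lo k `<=` hi k.
  by case: k => [|[|j]] //=; apply/subsetPset/ndA.
exists (refine_chain I lo hi); last first.
  split=> [n|]; [exact: (refine_chain_lo lo hi n.+2) |
                 exact: (refine_chain_lo lo hi 0)].
apply: (@in_Sigma_refine_chain _ _ I lo hi lo_sub_hi _ _ 1 0 SI) => //.
- move=> k m; case: k => [|[|j]]; case: m => [|[|i]] //= km.
  + by right; exact: bigcup_sup.
  + by right; exact: bigcup_sup.
  + by left; apply/subsetPset/ndA.
  + by left; apply/subsetPset/ndA.
- move=> x; have [Ux|nUx] := pselect ((\bigcup_n A n) x); last by exists 0.
  move: Ux; rewrite -eq_bigcup_seqD => -[[|k] _ /= Dx]; first by exists 1; split.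
  by exists k.+2.
- by case=> [|[|j]] //=; exact: bigcupT_measurable.
- by case=> [|[|j]] //=; exact: measurableT.
Qed.

Lemma exists_Sigma_chain_nonincreasing I A : in_Sigma I ->
  (forall n, measurable (A n)) -> nonincreasing_seq A ->
  exists2 J, in_Sigma J & (forall n, J (A n)) /\ J (\bigcap_n A n).
Proof.
move=> SI mA niA.
have [J SJ [JCA JU]] := exists_Sigma_chain_nondecreasing SI
  (fun n => measurableC (mA n)) (nondecreasing_seq_setC niA).
exists (setC @` J); first exact: in_Sigma_setC.
split=> [n|]; first by exists (~` A n); rewrite ?setCK.
exists (\bigcup_n ~` A n) => //.
by rewrite setC_bigcup; under eq_bigcapr do rewrite setCK.
Qed.
End monotone_sequences.


Lemma cvg_telescope (K : numFieldType) (V : normedModType K) (f : V^nat) (l : V) :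
  (fun m => \sum_(k < m) (f k.+1 - f k)) @ \oo --> l - f 0 -> f @ \oo --> l.
Proof.
move=> cvg_sum.
have -> : f = (fun m => \sum_(k < m) (f k.+1 - f k) + f 0).
  apply/funext => m; have := telescope_sumr f (leq0n m).
  by rewrite big_mkord => ->; rewrite subrK.
by rewrite -(subrK (f 0) l); exact: (cvgD cvg_sum (cvg_cst (f 0))).
Qed.

Section continuity_along_chains.
Context {d : measure_display} {T : measurableType d} {R : realType}.
Variables (v : set T -> R) (J : set (set T)).
Hypothesis v_sigma_additive : mu_sigma_additive v J.

Lemma sigma_additive_setD (C D : (set T)^nat) (Ct Dt : set T) :
  (forall k, J (C k)) -> (forall k, J (D k)) -> (forall k, D k `<=` C k) ->
  J Ct -> J Dt -> Dt `<=` Ct ->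
  trivIset setT (fun k => C k `\` D k) ->
  \bigcup_k (C k `\` D k) = Ct `\` Dt ->
  (fun m => \sum_(k < m) (v (C k) - v (D k))) @ \oo --> v Ct - v Dt.
Proof.
have rep1 (X Y : set T) : J X -> J Y -> Y `<=` X ->
    chain_rep J 1%N (fun _ => X) (fun _ => Y).
  by move=> JX JY YX; split => // i; rewrite ltnS leqn0 => /eqP ->.
have rep_set1 (X Y : set T) : rep_set 1%N (fun _ => X) (fun _ => Y) = X `\` Y.
  by apply/seteqP; split => [x [i _]//|x ?]; exists 0%N.
have rep_val1 (X Y : set T) : rep_val v 1%N (fun _ => X) (fun _ => Y) = v X - v Y.
  by rewrite /rep_val big_ord1.
move=> JC JD DC JCt JDt DCt tC UC.
have -> : (fun m => \sum_(k < m) (v (C k) - v (D k))) =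
    (fun m => \sum_(k < m) rep_val v 1%N (fun _ => C k) (fun _ => D k)).
  by apply/funext => m; apply: eq_bigr => k _; rewrite rep_val1.
rewrite -rep_val1; apply: (@v_sigma_additive (fun _ => 1%N) (fun k _ => C k)
  (fun k _ => D k) 1%N (fun _ => Ct) (fun _ => Dt)).
- by move=> k; exact: rep1.
- exact: rep1.
- by under eq_fun do rewrite rep_set1.
- by under eq_bigcupr do rewrite rep_set1; rewrite rep_set1.
Qed.

Lemma cvg_nondecreasing_chain (A : (set T)^nat) :
  (forall n, J (A n)) -> J (\bigcup_n A n) -> nondecreasing_seq A ->
  v (A n) @[n --> \oo] --> v (\bigcup_n A n).
Proof.
move=> JA JU ndA; apply: cvg_telescope.
apply: (@sigma_additive_setD (fun k => A k.+1) A) => //.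
- by move=> k; apply/subsetPset/ndA.
- exact: bigcup_sup.
- exact: trivIset_setD_succ.
- exact: bigcup_setD_succ.
Qed.

Lemma cvg_nonincreasing_chain (A : (set T)^nat) :
  (forall n, J (A n)) -> J (\bigcap_n A n) -> nonincreasing_seq A ->
  v (A n) @[n --> \oo] --> v (\bigcap_n A n).
Proof.
move=> JA JI niA; apply/cvgNP; apply: (@cvg_telescope _ _ (fun n => - v (A n))).
rewrite opprK addrC.
under eq_fun do under eq_bigr do rewrite opprK addrC.
apply: (@sigma_additive_setD A (fun k => A k.+1)) => //.
- by move=> k; apply/subsetPset/niA.
- exact: bigcap_inf.
- exact: trivIset_setD_succ_nonincreasing.
- exact: bigcup_setD_succ_nonincreasing.
Qed.
End continuity_along_chains.

Theorem proposition3 (d : measure_display) (T : measurableType d) (R : realType)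
  (v : set T -> R) :
  (exists I : set (set T), in_Sigma I) ->
  nondecreasing_sf v ->
  continuous_sf v ->
  v set0 = 0 ->
  (forall A : nat -> set T, (forall n, measurable (A n)) ->
     (forall n, A n `<=` A n.+1) ->
     v (A n) @[n --> \oo] --> v (\bigcup_n A n)) /\
  (forall A : nat -> set T, (forall n, measurable (A n)) ->
     (forall n, A n.+1 `<=` A n) ->
     v (A n) @[n --> \oo] --> v (\bigcap_n A n)).
Proof.
move=> [I SI] _ [_ v_cont] _; split=> A mA A_mono.
- have ndA : nondecreasing_seq A.
    by apply/nondecreasing_seqP => n; exact/subsetPset.
  have [J SJ [JA JU]] := exists_Sigma_chain_nondecreasing SI mA ndA.
  exact: (cvg_nondecreasing_chain (v_cont _ SJ) JA JU ndA).
- have niA : nonincreasing_seq A.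
    by apply/nonincreasing_seqP => n; exact/subsetPset.
  have [J SJ [JA JI]] := exists_Sigma_chain_nonincreasing SI mA niA.
  exact: (cvg_nonincreasing_chain (v_cont _ SJ) JA JI niA).
Qed.
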